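(* Let $(G,\precsim)$ be a compatible quasi-ordered abelian group and define the ternary relation $C$ on $G$ by: $C(x,y,z)$ holds iff $(x\neq y=z)\vee\big(x-z\in G^v\wedge y-z\precnsim x-z\big)\vee\big(y-z\in G^o\wedge x-z\in G^o\wedge 0\precnsim x-y\wedge 0\precnsim x-z\big)$. Then $C$ is a C-relation on $G$ compatible with $+$. Moreover, $\precsim$ is the only compatible quasi-order on $G$ inducing $C$ (via this formula), $C$ is definable by a quantifier-free formula in the language $\{0,+,-,\precsim\}$, and $\precsim$ is definable by a quantifier-free formula in the language $\{0,+,-,C\}$.
   Context: A compatible quasi-ordered abelian group is an abelian group $G$ with a total quasi-order $\precsim$ (reflexive, transitive, any two elements comparable) such that, writing $a\sim b$ for $a\precsim b\wedge b\precsim a$: $(Q_1)$ $x\sim0\Rightarrow x=0$; $(Q_2)$ $x\precsim y\wedge y\not\sim z\Rightarrow x+z\precsim y+z$. $a\precnsim b$ means $a\precsim b\wedge a\not\sim b$. With $cl(g)$ the $\sim$-class of $g$, $g$ is o-type if $cl(g)=\{g\}$ and $g$ is not of order $2$; $G^o$ is the set of o-type elements and $G^v=G\setminus G^o$. A C-relation on a set $M$ is a ternary relation $C$ satisfying: $(C_1)$ $C(x,y,z)\Rightarrow C(x,z,y)$; $(C_2)$ $C(x,y,z)\Rightarrow\neg C(y,x,z)$; $(C_3)$ $C(x,y,z)\Rightarrow C(w,y,z)\vee C(x,w,z)$; $(C_4)$ $x\neq y\Rightarrow C(x,y,y)$. It is compatible with $+$ if $C(x,y,z)\Rightarrow C(v+x+u,v+y+u,v+z+u)$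 for all $x,y,z,u,v$. *)

From HB Require Import structures.
From mathcomp Require Import all_boot all_algebra.
Set Implicit Arguments. Unset Strict Implicit. Unset Printing Implicit Defensive.
Import GRing.Theory.
Local Open Scope ring_scope.

Section QO.
Variables (G : zmodType) (le : G -> G -> Prop).

Definition qsim (a b : G) : Prop := le a b /\ le b a.
Definition qlt (a b : G) : Prop := le a b /\ ~ qsim a b.

Definition compatible_qo : Prop :=
  [/\ (forall x, le x x),
      (forall x y z, le x y -> le y z -> le x z),
      (forall x y, le x y \/ le y x),
      (forall x, qsim x 0 -> x = 0)
    & (forall x y z, le x y -> ~ qsim y z -> le (x + z) (y + z))].

Definition order2 (g : G) : Prop := g <> 0 /\ g + g = 0.

Definition o_type (g : G) : Prop := (forall h, qsim h g -> h = g) /\ ~ order2 g.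
Definition v_type (g : G) : Prop := ~ o_type g.

Definition Cind (x y z : G) : Prop :=
  (x <> y /\ y = z)
  \/ (v_type (x - z) /\ qlt (y - z) (x - z))
  \/ (o_type (y - z) /\ o_type (x - z) /\ qlt 0 (x - y) /\ qlt 0 (x - z)).
End QO.

Section CRel.
Variables (M : Type) (C : M -> M -> M -> Prop).
Definition C_relation : Prop :=
  [/\ (forall x y z, C x y z -> C x z y),
      (forall x y z, C x y z -> ~ C y x z),
      (forall x y z w, C x y z -> C w y z \/ C x w z)
    & (forall x y, x <> y -> C x y y)].
End CRel.

Definition C_compatible (G : zmodType) (C : G -> G -> G -> Prop) : Prop :=
  forall x y z u v, C x y z -> C (v + x + u) (v + y + u) (v + z + u).

Inductive term : Type :=
  | TVar of nat | TZero | TAdd of term & term | TOpp of term.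

Fixpoint teval (G : zmodType) (e : nat -> G) (t : term) : G :=
  match t with
  | TVar n => e n
  | TZero => 0
  | TAdd t1 t2 => teval e t1 + teval e t2
  | TOpp t1 => - teval e t1
  end.

Inductive qf (A : Type) : Type :=
  | QAtom of A | QNot of qf A | QAnd of qf A & qf A | QOr of qf A & qf A.

Fixpoint qf_holds (A : Type) (sem : A -> Prop) (f : qf A) : Prop :=
  match f with
  | QAtom a => sem a
  | QNot f1 => ~ qf_holds sem f1
  | QAnd f1 f2 => qf_holds sem f1 /\ qf_holds sem f2
  | QOr f1 f2 => qf_holds sem f1 \/ qf_holds sem f2
  end.

Inductive atomLe : Type := LEq of term & term | LLe of term & term.
Inductive atomC : Type := CEq of term & term | CC of term & term & term.

Definition semLe (G : zmodType) (le : G -> G -> Prop) (e : nat -> G) (a : atomLe) : Prop :=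
  match a with
  | LEq t1 t2 => teval e t1 = teval e t2
  | LLe t1 t2 => le (teval e t1) (teval e t2)
  end.

Definition semC (G : zmodType) (C : G -> G -> G -> Prop) (e : nat -> G) (a : atomC) : Prop :=
  match a with
  | CEq t1 t2 => teval e t1 = teval e t2
  | CC t1 t2 t3 => C (teval e t1) (teval e t2) (teval e t3)
  end.

Definition env (G : zmodType) (s : seq G) : nat -> G := fun n => nth 0 s n.

(* Call x v-type when x <> 0 and x ~ -x; these are exactly the non o-type
   elements.  Axiom (Q2) forces every class other than those of v-type
   elements to be a singleton, v-type elements lie strictly above all o-type
   ones, and on o-type elements x <~ y is equivalent to 0 <~ y - x.  With
   these facts the axioms (C1)-(C4) are checked case by case after translating
   z to 0.  Conversely, C determines the v-type elements (t <> 0 and neither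
   C(t,-t,0) nor C(-t,t,0)) and the strict negatives (C(-d,d,0)), and from
   these a quantifier-free definition of <~ in terms of C is read off; this
   definition gives uniqueness at once. *)
From mathcomp Require Import all_boot all_algebra.
From Stdlib Require Import Classical Setoid.
Import GRing.Theory.
Local Open Scope ring_scope.

Definition vtype {G : zmodType} (le : G -> G -> Prop) (x : G) : Prop :=
  x <> 0 /\ qsim le x (-x).

(* [Cind le x y z] is [Cind0 le (x - z) (y - z)], see [Cind_subr]. *)
Definition Cind0 {G : zmodType} (le : G -> G -> Prop) (a b : G) : Prop :=
  (a <> b /\ b = 0) \/ (vtype le a /\ qlt le b a)
  \/ (~ vtype le b /\ ~ vtype le a /\ qlt le 0 (a - b) /\ qlt le 0 a).

Lemma oppr_neq0 {G : zmodType} {x : G} : x <> 0 -> - x <> 0.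
Proof. by move=> x0 /eqP; rewrite oppr_eq0 => /eqP. Qed.

Lemma vtype_opp {G : zmodType} {le : G -> G -> Prop} {x : G} :
  vtype le x -> vtype le (-x).
Proof. by case=> /oppr_neq0 x0 [a b]; split; rewrite ?opprK. Qed.

Lemma vtype_oppE {G : zmodType} {le : G -> G -> Prop} {x : G} :
  vtype le (-x) <-> vtype le x.
Proof. by split=> /vtype_opp; rewrite ?opprK. Qed.

Lemma subrDD (G : zmodType) (v x u z : G) : (v + x + u) - (v + z + u) = x - z.
Proof. by rewrite [v + z + u]addrC addrKA [v + x]addrC addrKA. Qed.

Lemma subrBB (G : zmodType) (x y z : G) : (x - z) - (y - z) = x - y.
Proof. by rewrite opprB addrA subrK. Qed.

Section CompatibleQuasiOrder.

Context {G : zmodType} {le : G -> G -> Prop} (Hc : compatible_qo le).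

Lemma qle_refl (x : G) : le x x.
Proof. by case: Hc. Qed.

Lemma qle_trans {x y z : G} : le x y -> le y z -> le x z.
Proof. by case: Hc => _ t _ _ _; apply: t. Qed.

Lemma qle_total (x y : G) : le x y \/ le y x.
Proof. by case: Hc. Qed.

Lemma qle_anti0 {x : G} : le x 0 -> le 0 x -> x = 0.
Proof. by case: Hc => _ _ _ q _ a b; apply: q. Qed.

Lemma qle_add2r {x y z : G} : le x y -> ~ qsim le y z -> le (x + z) (y + z).
Proof. by case: Hc => _ _ _ _ q; apply: q. Qed.

Lemma qle_of_not {x y : G} : ~ le x y -> le y x.
Proof. by case: (qle_total x y). Qed.

Lemma qsim_refl (x : G) : qsim le x x.
Proof. by split; apply: qle_refl. Qed.

Lemma qsim0_eq0 {x : G} : qsim le 0 x -> x = 0.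
Proof. by case=> a b; apply: qle_anti0. Qed.

Lemma qlt_irr (a : G) : ~ qlt le a a.
Proof. by case=> _; apply; apply: qsim_refl. Qed.

Lemma qlt_le_trans {x y z : G} : qlt le x y -> le y z -> qlt le x z.
Proof.
move=> [a b] c; split; first exact: qle_trans a c.
by move=> [d e]; apply: b; split => //; apply: qle_trans c e.
Qed.

Lemma qltNge (x y : G) : ~ qlt le y x <-> le x y.
Proof.
split; last by move=> l [yx]; apply; split.
move=> n; case: (qle_total x y) => // h; apply: NNPP => nxy.
by apply: n; split => // -[_ /nxy].
Qed.

Lemma qlt0E (d : G) : qlt le 0 d <-> le 0 d /\ d <> 0.
Proof.
split; first by move=> [a b]; split => // e; apply: b; rewrite e; apply: qsim_refl.
by move=> [a b]; split => // /qsim0_eq0.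
Qed.

(* (Q2) applied to g <~ h and h <~ g, translated by -g. *)
Lemma qsim_eq {g h : G} : ~ qsim le g (-g) -> qsim le h g -> h = g.
Proof.
move=> ng [hg gh].
have nh : ~ qsim le h (-g).
  by case=> a b; apply: ng; split; [apply: qle_trans gh a | apply: qle_trans b hg].
have := qle_add2r hg ng; have := qle_add2r gh nh; rewrite !subrr => A B.
exact/subr0_eq/qle_anti0.
Qed.

Lemma not_qsim_opp {g : G} : ~ vtype le g -> g <> 0 -> ~ qsim le g (-g).
Proof. by move=> nV g0 gg; apply: nV. Qed.

Lemma o_qsim_eq {g h : G} : ~ vtype le g -> qsim le h g -> h = g.
Proof.
move=> nV hg; case: (classic (g = 0)) => [g0 | /(not_qsim_opp nV)/qsim_eq]; last exact.
by subst g; case: hg => a b; apply: qle_anti0.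
Qed.

Lemma qle0_oppr {x : G} : le x 0 -> le 0 (-x).
Proof.
move=> h; case: (classic (x = 0)) => [-> | x0]; first by rewrite oppr0; apply: qle_refl.
have ns : ~ qsim le 0 (-x) by move=> /qsim0_eq0; apply: oppr_neq0.
by have := qle_add2r h ns; rewrite subrr add0r.
Qed.

Lemma qge0_oppr {x : G} : le 0 x -> ~ qsim le x (-x) -> le (-x) 0.
Proof. by move=> h ns; have := qle_add2r h ns; rewrite subrr add0r. Qed.

Lemma vtype_ge0 {x : G} : vtype le x -> le 0 x.
Proof.
move=> [x0 [a b]]; apply: NNPP => n.
exact: n (qle_trans (qle0_oppr (qle_of_not n)) b).
Qed.

Lemma double_qsim_opp {d : G} : d + d = 0 -> qsim le d (-d).
Proof.
move=> dd; have -> : - d = d by apply/eqP; rewrite eq_sym -addr_eq0 dd.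
exact: qsim_refl.
Qed.

Lemma o_double_gt0 {d : G} : ~ vtype le d -> qlt le 0 d -> qlt le 0 (d + d).
Proof.
move=> nV /qlt0E [h d0]; have ns := not_qsim_opp nV d0; apply/qlt0E; split.
  apply: NNPP => /qle_of_not l.
  have nm : ~ qsim le 0 (-d) by move=> /qsim0_eq0; apply: oppr_neq0.
  have := qle_add2r l nm; rewrite addrK add0r => l2.
  by apply: (ns); split => //; apply: qle_trans (qge0_oppr h ns) h.
by move=> /double_qsim_opp.
Qed.

Lemma qlt0_oppr {x : G} : le x 0 -> x <> 0 -> qlt le 0 (-x).
Proof. by move=> l x0; apply/qlt0E; split; [apply: qle0_oppr | apply: oppr_neq0]. Qed.

Lemma o_double_le0 {d : G} :
  ~ vtype le d -> le d 0 -> d <> 0 -> le (d + d) 0 /\ d + d <> 0.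
Proof.
move=> nV h d0; split; last by move=> /double_qsim_opp; apply: not_qsim_opp.
have nm : ~ qsim le 0 d by move=> /qsim0_eq0.
by have := qle_add2r h nm; rewrite add0r => l; apply: qle_trans l h.
Qed.

Lemma qsim_addr_opp {a c : G} :
  qsim le a (-a) -> ~ qsim le (-a) c -> ~ qsim le a c -> qsim le (a + c) (-a + c).
Proof. by move=> [a1 a2] n1 n2; split; apply: qle_add2r. Qed.

Lemma o_addr_vtype {o v : G} :
  le 0 o -> ~ qsim le o (-o) -> vtype le v -> le v o ->
  [/\ v + v = 0, ~ le (o + v) o, le 0 (o + v) & ~ vtype le (o + v)].
Proof.
move=> l0 ng Vv lvo; have [v0 vv'] := Vv.
have nvo : ~ qsim le v o by move=> /(qsim_eq ng) E; apply: ng; rewrite -E.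
have nmvo : ~ qsim le (-v) o by move=> /(qsim_eq ng) E; apply: ng; rewrite -E opprK; case: vv'.
have a : le (v - o) 0 by have := qle_add2r lvo ng; rewrite subrr.
have vo_ne : v - o <> 0.
  by move=> /subr0_eq E; apply: nvo; rewrite E; apply: qsim_refl.
have nle : ~ le 0 (v - o) by move=> h; apply: vo_ne; apply: qle_anti0.
have c : ~ qsim le (o - v) (-(o - v)).
  by rewrite opprB => -[h1 h2]; apply/nle/vtype_ge0; split; rewrite ?opprB.
have d : v + o = o - v by apply: (qsim_eq c); rewrite [o - v]addrC; apply: qsim_addr_opp.
have vN : v = - v by move: d; rewrite [v + o]addrC => /addrI.
have vv : v + v = 0 by rewrite {2}vN subrr.
have mu : -(o + v) = v - o by rewrite opprD -vN addrC.
split => //.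
- move=> h; have := qle_add2r h ng; rewrite subrr [o + v]addrC addrK => l.
  by apply: v0; apply: qle_anti0 l (vtype_ge0 Vv).
- by have := qle0_oppr a; rewrite -mu opprK.
- by rewrite -vtype_oppE mu => /vtype_ge0.
Qed.

(* If v <~ o, then [o_addr_vtype] applied twice gives o < o + v < o + v + v = o. *)
Lemma o_lt_v {o v : G} : ~ vtype le o -> vtype le v -> qlt le o v.
Proof.
move=> no Vv; apply: NNPP => /(qltNge v o) lvo.
have v0 := Vv.1.
case: (classic (o = 0)) => o0.
  by subst o; apply: v0; apply: qle_anti0 lvo (vtype_ge0 Vv).
case: (qle_total 0 o) => l0; last first.
  by apply: v0; apply: qle_anti0 (qle_trans lvo l0) (vtype_ge0 Vv).
have [vv nl l1 nV1] := o_addr_vtype l0 (not_qsim_opp no o0) Vv lvo.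
have lou := qle_of_not nl.
have ou0 : o + v <> 0 by move=> e; apply: nl; rewrite e.
have [_ nl2 _ _] := o_addr_vtype l1 (not_qsim_opp nV1 ou0) Vv (qle_trans lvo lou).
by apply: nl2; rewrite -addrA vv addr0.
Qed.

Lemma vtype_le {v w : G} : vtype le v -> le v w -> vtype le w.
Proof. by move=> Vv l; apply: NNPP => /o_lt_v/(_ Vv) [wv]; apply; split. Qed.

Lemma qlt_oppl_vtype {a b : G} : vtype le a -> qlt le b a -> qlt le (-b) a.
Proof.
move=> Va [hba nba]; case: (classic (vtype le b)) => [[b0 [b1 b2]]|nVb].
  split; first exact: qle_trans b2 hba.
  by move=> [h1 h2]; apply: nba; split => //; apply: qle_trans h2 b2.
by apply: o_lt_v => //; rewrite vtype_oppE.
Qed.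

Lemma vtype_addr_qle {a b : G} : vtype le a -> qlt le b a -> le (a + b) a.
Proof.
move=> Va lba; have [a0 [a1 a2]] := Va.
have [hnba nnba] := qlt_oppl_vtype Va lba.
have n1 : ~ qsim le a (-b) by move=> [x y]; apply: nnba; split.
have n2 : ~ qsim le (-a) (-b).
  by move=> [x y]; apply: nnba; split => //; apply: qle_trans a1 x.
have [_ bn] := qsim_addr_opp (conj a1 a2) n2 n1.
apply: NNPP => n; have l1 := qle_of_not n.
have ns : ~ qsim le (a + b) (-b) by move=> [x y]; apply: n; apply: qle_trans x hnba.
have := qle_add2r l1 ns; rewrite addrK => l2.
apply: n; apply: qle_trans _ l2.
have [_ [c1 _]] := vtype_le Va l1; apply: qle_trans c1 _.
by rewrite opprD.
Qed.

Lemma vtype_addr_qsim {a b : G} : vtype le a -> qlt le b a -> qsim le (a + b) a.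
Proof.
move=> Va lba; have [a0 [a1 a2]] := Va.
have [hba nba] := lba.
have [hnba nnba] := qlt_oppl_vtype Va lba.
have n1 : ~ qsim le a b by move=> [x y]; apply: nba; split.
have n2 : ~ qsim le (-a) b.
  by move=> [x y]; apply: nba; split => //; apply: qle_trans a1 x.
have [_ bb] := qsim_addr_opp (conj a1 a2) n2 n1.
split; first exact: vtype_addr_qle Va lba.
apply: NNPP => n; have l2 := qle_of_not n.
have ns : ~ qsim le a (-b) by move=> [x y]; apply: nnba; split.
have := qle_add2r l2 ns; rewrite addrK => l3.
apply: n; apply: (qle_trans l3).
have [_ [c1 _]] := vtype_le Va l3; apply: qle_trans c1 _.
by rewrite opprB addrC.
Qed.

Lemma o_typeE (x : G) : o_type le x <-> ~ vtype le x.
Proof.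
split.
  move=> [sing nord] [x0 xx].
  have e : - x = x by apply: sing; case: xx.
  by apply: nord; split => //; rewrite -{1}e addNr.
move=> nV; split; first by move=> h; apply: o_qsim_eq.
by move=> [x0 /double_qsim_opp xx]; apply: nV.
Qed.

Lemma v_typeE (x : G) : v_type le x <-> vtype le x.
Proof. by rewrite /v_type o_typeE; split; [apply: NNPP | tauto]. Qed.

Lemma Cind_subr (x y z : G) : Cind le x y z <-> Cind0 le (x - z) (y - z).
Proof.
rewrite /Cind /Cind0 !v_typeE !o_typeE subrBB.
have e1 : (x - z = y - z) <-> (x = y) by split => [/addIr|->].
have e2 : (y - z = 0) <-> (y = z) by split => [/subr0_eq|->] //; rewrite subrr.
by rewrite e1 e2.
Qed.

Lemma Cind0E (a b : G) : Cind le a b 0 <-> Cind0 le a b.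
Proof. by rewrite Cind_subr !subr0. Qed.

Lemma o_qle_subr_ge0 {x y : G} :
  ~ vtype le x -> ~ vtype le y -> le x y -> le 0 (y - x).
Proof.
move=> nVx nVy hxy; case: (classic (x = 0)) => x0; first by subst x; rewrite subr0.
have nsx := not_qsim_opp nVx x0.
case: (classic (qsim le y (-x))) => qs; last first.
  by have := qle_add2r hxy qs; rewrite subrr.
rewrite (o_qsim_eq _ qs) ?vtype_oppE // in hxy *.
case: (qle_total 0 x) => l.
  by exfalso; apply: (nsx); split => //; apply: qle_trans (qge0_oppr l nsx) l.
have [l2 _] := o_double_le0 nVx l x0.
by have := qle0_oppr l2; rewrite opprD.
Qed.

Lemma o_qle_of_vtype_subr {x y : G} :
  ~ vtype le x -> ~ vtype le y -> vtype le (y - x) -> le y x -> le x y.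
Proof.
move=> nVx nVy Vw lyx.
have [_ n1] := o_lt_v nVy Vw.
have [_ n1'] := o_lt_v nVy (vtype_opp Vw).
have := qsim_addr_opp Vw.2 (fun q => n1' (conj q.2 q.1)) (fun q => n1 (conj q.2 q.1)).
rewrite opprB subrK => /(o_qsim_eq nVx) e.
have [_ n3] := o_lt_v nVx Vw.
by have := qle_add2r lyx n3; rewrite [y + _]addrC e [x + _]addrC subrK.
Qed.

Lemma o_subr_ge0_qle {x y : G} :
  ~ vtype le x -> ~ vtype le y -> le 0 (y - x) -> le x y.
Proof.
move=> nVx nVy h; apply: NNPP => nxy; have lyx := qle_of_not nxy.
case: (classic (x = 0)) => x0; first by subst x; rewrite subr0 in h.
case: (classic (qsim le x (-y))) => qs.
  case: (classic (y = 0)) => y0.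
    by subst y; rewrite oppr0 in qs; case: qs => a b; apply: x0; apply: qle_anti0.
  rewrite (o_qsim_eq _ qs) ?vtype_oppE // opprK in h nxy.
  case: (qle_total 0 y) => l.
    by apply: nxy; apply: qle_trans (qge0_oppr l (not_qsim_opp nVy y0)) l.
  have [l2 n2] := o_double_le0 nVy l y0.
  by apply: n2; apply: qle_anti0 l2 h.
have := qle_add2r lyx qs; rewrite subrr => h2.
case: (classic (y - x = 0)) => w0.
  by apply: nxy; rewrite (subr0_eq w0); apply: qle_refl.
apply/nxy/o_qle_of_vtype_subr => //; split => //.
apply: NNPP => ns; apply: w0; have := qge0_oppr h ns; rewrite opprB => l.
by apply: oppr_inj; rewrite oppr0 opprB; apply: qle_anti0 l h2.
Qed.

Lemma o_qle_subr {x y : G} :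
  ~ vtype le x -> ~ vtype le y -> (le x y <-> le 0 (y - x)).
Proof. by move=> nVx nVy; split; [apply: o_qle_subr_ge0 | apply: o_subr_ge0_qle]. Qed.

Lemma Cind0_shift (a b : G) : Cind0 le a b -> Cind0 le (a - b) (-b).
Proof.
case=> [[ab b0] | [[Va lba] | [nVb [nVa [l1 l2]]]]].
- by left; subst b; rewrite oppr0 addr0.
- right; left; have lnb := qlt_oppl_vtype Va lba.
  have [_ ms] := vtype_addr_qsim Va lnb.
  by split; [apply: vtype_le Va ms | apply: qlt_le_trans lnb ms].
- case: (classic (vtype le (a - b))) => V2.
    by right; left; split => //; apply: o_lt_v; rewrite ?vtype_oppE.
  by right; right; rewrite vtype_oppE opprK subrK.
Qed.

Lemma Cind0_asym (a b : G) : Cind0 le a b -> ~ Cind0 le b a.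
Proof.
case=> [[ab b0] | [[Va lba] | [nVb [nVa [l1 l2]]]]].
- subst b; case=> [[_ a0] | [[[V0 _] _] | [_ [_ [_ l]]]]] //.
  exact: qlt_irr l.
- case=> [[_ a0] | [[_ [lab _]] | [nVa _]]]; [exact: Va.1 a0 | | exact: nVa Va].
  by case: lba => ba; apply; split.
- case=> [[_ a0] | [[Vb _] | [_ [_ [l3 _]]]]] //; first by subst a; apply: qlt_irr l2.
  have h1 := (o_qle_subr nVb nVa).2 ((qlt0E _).1 l1).1.
  have h2 := (o_qle_subr nVa nVb).2 ((qlt0E _).1 l3).1.
  have e := o_qsim_eq nVb (conj h2 h1); subst a.
  by rewrite subrr in l1; apply: qlt_irr l1.
Qed.

Lemma Cind0_o_split {a b c : G} :
  ~ vtype le b -> ~ vtype le a -> qlt le 0 (a - b) -> qlt le 0 a ->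
  ~ vtype le c -> c <> 0 -> a <> c -> ~ qlt le 0 (a - c) ->
  Cind0 le c b.
Proof.
move=> nVb nVa l1 l2 nVc c0 ac h.
have nl : ~ le 0 (a - c).
  by move=> l; apply: h; apply/qlt0E; split => // /subr0_eq.
have ncl : ~ le c a by move=> l; apply: nl; apply/(o_qle_subr nVc nVa).
have lac := qle_of_not ncl.
have lba := (o_qle_subr nVb nVa).2 ((qlt0E _).1 l1).1.
right; right; do 2!split => //; split.
  apply/qlt0E; split; first exact/(o_qle_subr nVb nVc)/(qle_trans lba lac).
  by move=> /subr0_eq E; apply: ncl; rewrite E.
by apply/qlt0E; split => //; apply: qle_trans ((qlt0E _).1 l2).1 lac.
Qed.

Lemma Cind0_split (a b c : G) : Cind0 le a b -> Cind0 le c b \/ Cind0 le a c.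
Proof.
case=> [[ab b0] | [[Va lba] | [nVb [nVa [l1 l2]]]]].
- case: (classic (c = 0)) => c0; subst.
    by right; left.
  by left; left.
- case: (classic (qlt le c a)) => [h | /qltNge lac]; first by right; right; left.
  by left; right; left; split; [apply: vtype_le Va lac | apply: qlt_le_trans lba lac].
- case: (classic (vtype le c)) => Vc.
    by left; right; left; split => //; apply: o_lt_v.
  case: (classic (c = 0)) => c0.
    by subst c; right; left; split => // e; subst a; apply: qlt_irr l2.
  case: (classic (qlt le 0 (a - c))) => h; first by right; right; right.
  case: (classic (a = c)) => ac; first by subst c; left; right; right.
  by left; apply: (Cind0_o_split nVb nVa l1 l2).
Qed.

Lemma vtype_Cind (t : G) :
  vtype le t <-> t <> 0 /\ ~ Cind le t (-t) 0 /\ ~ Cind le (-t) t 0.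
Proof.
rewrite !Cind0E; split.
  move=> Vt; have [t0 [tt1 tt2]] := Vt; split => //; split.
    case=> [[_ e] | [[_ [_ ns]] | [nV _]]].
    - exact: oppr_neq0 t0 e.
    - by apply: ns; split.
    - exact: nV (vtype_opp Vt).
  case=> [[_ e] | [[_ [_ ns]] | [nV _]]].
  - exact: t0 e.
  - by apply: ns; split.
  - exact: nV Vt.
move=> [t0 [n1 n2]]; apply: NNPP => nV.
have nV' : ~ vtype le (-t) by rewrite vtype_oppE.
case: (qle_total 0 t) => l.
  have t_gt0 : qlt le 0 t by apply/qlt0E.
  apply: n1; right; right; rewrite opprK.
  by split => //; split => //; split => //; apply: o_double_gt0.
have mt_gt0 := qlt0_oppr l t0.
by apply: n2; right; right; split => //; split => //; split => //; apply: o_double_gt0.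
Qed.

Lemma qlt0_Cind (d : G) : qlt le d 0 <-> Cind le (-d) d 0.
Proof.
rewrite Cind0E; split.
  move=> [ld nd].
  have d0 : d <> 0 by move=> e; apply: nd; rewrite e; apply: qsim_refl.
  have nVd : ~ vtype le d by move=> V; apply: nd; split => //; apply: vtype_ge0.
  have nV' : ~ vtype le (-d) by rewrite vtype_oppE.
  have md_gt0 := qlt0_oppr ld d0.
  by right; right; split => //; split => //; split => //; apply: o_double_gt0.
case=> [[ne e] | [[Vmd [_ ns]] | [nVd [nVmd [_ l2]]]]].
- by exfalso; apply: ne; rewrite e oppr0.
- by exfalso; case: Vmd => _; rewrite opprK => -[x y]; apply: ns.
- have [a b] := (qlt0E _).1 l2.
  have := qge0_oppr a (not_qsim_opp nVmd b); rewrite opprK => l.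
  by split => // -[x y]; apply: b; rewrite (qle_anti0 l y) oppr0.
Qed.

Lemma Cind_vtype (x y : G) : vtype le x -> (Cind le x y 0 <-> qlt le y x).
Proof.
move=> Vx; rewrite Cind0E; split; last by right; left.
case=> [[ne e] | [[_ h] | [_ [nV _]]]] //.
by subst y; apply/qlt0E; split; [apply: vtype_ge0 | move=> e; apply: ne].
Qed.

Lemma qle_by_Cind (x y : G) :
  le x y <->
  (vtype le x /\ ~ Cind le x y 0) \/ (~ vtype le x /\ vtype le y)
  \/ (~ vtype le x /\ ~ vtype le y /\ ~ Cind le (x - y) (y - x) 0).
Proof.
have := qltNge x y; case: (classic (vtype le x)) => Vx.
  by have := Cind_vtype x y Vx; tauto.
case: (classic (vtype le y)) => Vy; first by have [] := o_lt_v Vx Vy; tauto.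
rewrite -[x - y]opprB -qlt0_Cind (qltNge 0) -o_qle_subr //; tauto.
Qed.

End CompatibleQuasiOrder.

Definition tsub (a b : term) : term := TAdd a (TOpp b).

Definition qlt_qf (a b : term) : qf atomLe :=
  QAnd (QAtom (LLe a b)) (QNot (QAnd (QAtom (LLe a b)) (QAtom (LLe b a)))).

Definition vtype_qf (t : term) : qf atomLe :=
  QAnd (QNot (QAtom (LEq t TZero)))
    (QAnd (QAtom (LLe t (TOpp t))) (QAtom (LLe (TOpp t) t))).

Definition Cind_qf : qf atomLe :=
  QOr (QAnd (QNot (QAtom (LEq (TVar 0) (TVar 1)))) (QAtom (LEq (TVar 1) (TVar 2))))
  (QOr (QAnd (vtype_qf (tsub (TVar 0) (TVar 2)))
             (qlt_qf (tsub (TVar 1) (TVar 2)) (tsub (TVar 0) (TVar 2))))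
   (QAnd (QNot (vtype_qf (tsub (TVar 1) (TVar 2))))
     (QAnd (QNot (vtype_qf (tsub (TVar 0) (TVar 2))))
       (QAnd (qlt_qf TZero (tsub (TVar 0) (TVar 1)))
             (qlt_qf TZero (tsub (TVar 0) (TVar 2))))))).

Lemma Cind_qfE {G : zmodType} {le : G -> G -> Prop} (Hc : compatible_qo le) (x y z : G) :
  Cind le x y z <-> qf_holds (semLe le (env [:: x; y; z])) Cind_qf.
Proof. by rewrite /Cind !(v_typeE Hc) !(o_typeE Hc). Qed.

Definition vtype_qfC (t : term) : qf atomC :=
  QAnd (QNot (QAtom (CEq t TZero)))
    (QAnd (QNot (QAtom (CC t (TOpp t) TZero))) (QNot (QAtom (CC (TOpp t) t TZero)))).

Definition qle_qfC : qf atomC :=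
  QOr (QAnd (vtype_qfC (TVar 0)) (QNot (QAtom (CC (TVar 0) (TVar 1) TZero))))
  (QOr (QAnd (QNot (vtype_qfC (TVar 0))) (vtype_qfC (TVar 1)))
   (QAnd (QNot (vtype_qfC (TVar 0))) (QAnd (QNot (vtype_qfC (TVar 1)))
      (QNot (QAtom (CC (tsub (TVar 0) (TVar 1)) (tsub (TVar 1) (TVar 0)) TZero)))))).

Lemma qle_qfCE {G : zmodType} {le : G -> G -> Prop} (Hc : compatible_qo le) (x y : G) :
  le x y <-> qf_holds (semC (Cind le) (env [:: x; y])) qle_qfC.
Proof. by rewrite (qle_by_Cind Hc) !(vtype_Cind Hc). Qed.

Lemma qf_holds_semC_ext (G : zmodType) (C1 C2 : G -> G -> G -> Prop) (e : nat -> G) :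
  (forall a b c, C1 a b c <-> C2 a b c) ->
  forall f, qf_holds (semC C1 e) f <-> qf_holds (semC C2 e) f.
Proof.
move=> E; elim=> [[t1 t2|t1 t2 t3]|f IH|f1 IH1 f2 IH2|f1 IH1 f2 IH2] /=.
- by [].
- exact: E.
- by rewrite IH.
- by rewrite IH1 IH2.
- by rewrite IH1 IH2.
Qed.

Theorem mainTheorem18 (G : zmodType) (le : G -> G -> Prop) :
  compatible_qo le ->
  [/\ C_relation (Cind le),
      C_compatible (Cind le),
      (forall le' : G -> G -> Prop, compatible_qo le' ->
         (forall x y z, Cind le' x y z <-> Cind le x y z) ->
         forall x y, le' x y <-> le x y),
      (exists phi : qf atomLe, forall x y z : G,
         Cind le x y z <-> qf_holds (semLe le (env [:: x; y; z])) phi)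
    & (exists psi : qf atomC, forall x y : G,
         le x y <-> qf_holds (semC (Cind le) (env [:: x; y])) psi)].
Proof.
move=> Hc; split.
- split.
  + move=> x y z; rewrite !(Cind_subr Hc) => /(Cind0_shift Hc).
    by rewrite subrBB opprB.
  + by move=> x y z; rewrite !(Cind_subr Hc); apply: Cind0_asym.
  + by move=> x y z w; rewrite !(Cind_subr Hc); apply: Cind0_split.
  + by move=> x y xy; left.
- by move=> x y z u v; rewrite !(Cind_subr Hc) !subrDD.
- move=> le' Hc' E x y; rewrite (qle_qfCE Hc) (qle_qfCE Hc').
  exact: qf_holds_semC_ext.
- by exists Cind_qf; apply: Cind_qfE.
- by exists qle_qfC; apply: qle_qfCE.
Qed.
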